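(* Let $n\ge3$ and let $G\colon[-2,2]\to\mathbb{R}^n$ be defined as in the context. For $T=(T_0,\dots,T_{n-2})\in[1,\infty)^{n-1}$ let $$\mathcal{F}(T):=\Big\{\sum_{r=0}^{n-2}s_rG^{(r)}(t): t\in[-2,2],\ |s_r|\leq T_r\ (0\le r\le n-2)\Big\},$$ for $\sigma>0$ let $\mathcal{F}_\sigma(T)$ be the Euclidean $\sigma$-neighbourhood of $\mathcal{F}(T)$, and let $\mathcal{L}_\sigma(T):=\mathcal{F}_\sigma(T)\cap\mathbb{Z}^n$. Then for all $R\geq T_0,\dots,T_{n-2}\geq\sigma\geq1$, $$\#\mathcal{L}_\sigma(T)\leq C\,R\prod_{r=0}^{n-2}T_r,$$ where $C$ depends only on $\sigma$, $n$ and the curve.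
   Context: Let $\gamma(t)=(t,f(t))$ with $f\colon U\to\mathbb{R}^{n-1}$ smooth on an open set $U\supset[-2,2]$ and $\det[\gamma^{(1)}(t)\ \cdots\ \gamma^{(n)}(t)]\neq0$ for $t\in U$. Let $\mathbf{e}_1(t),\dots,\mathbf{e}_n(t)$ be the Frenet frame, i.e. the orthonormal system obtained by applying Gram–Schmidt to $\gamma^{(1)}(t),\dots,\gamma^{(n)}(t)$. Standing assumption of the paper: the $n$-th component $\mathbf{e}_{n,n}(t)$ of $\mathbf{e}_n(t)$ is nonzero for all $t\in U$. Define $G(t):=\mathbf{e}_n(t)/\mathbf{e}_{n,n}(t)$; $G^{(r)}$ denotes its $r$-th derivative ($G^{(0)}=G$). *)

From HB Require Import structures.
From mathcomp Require Import all_boot all_order all_algebra.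
From mathcomp Require Import all_classical all_reals all_analysis.
Set Implicit Arguments. Unset Strict Implicit. Unset Printing Implicit Defensive.
Import Order.TTheory GRing.Theory Num.Theory.
Local Open Scope ring_scope.

Section Defs.
Variable R : realType.

(* Vectors of R^n are represented as functions nat -> R; only the
   coordinates 0 .. n-1 are relevant (all sums below range over i < n). *)
Definition vdot (n : nat) (u v : nat -> R) : R := \sum_(i < n) u i * v i.
Definition vnorm (n : nat) (u : nat -> R) : R := Num.sqrt (vdot n u u).

Definition gs_step (n : nat) (es : seq (nat -> R)) (v : nat -> R) : nat -> R :=
  let w := fun i => v i - \sum_(e <- es) vdot n v e * e i in
  fun i => w i / vnorm n w.

Definition gram_schmidt (n : nat) (vs : seq (nat -> R)) : seq (nat -> R) :=
  foldl (fun es v => rcons es (gs_step n es v)) [::] vs.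

(* The curve gamma(t) = (t, f(t)); f i is the i-th component of f
   (i = 0 .. n-2), so gamma has coordinates gamma_0 = t, gamma_i = f_(i-1). *)
Definition gamma (f : nat -> R -> R) (i : nat) : R -> R :=
  if i == 0%N then id else f i.-1.

Definition gamma_der (f : nat -> R -> R) (r : nat) (t : R) : nat -> R :=
  fun i => derive1n r (gamma f i) t.

Definition wronski_mx (n : nat) (f : nat -> R -> R) (t : R) : 'M[R]_n :=
  \matrix_(i < n, j < n) gamma_der f j.+1 t i.

(* Frenet frame: e_1(t), ..., e_n(t), Gram--Schmidt of gamma^(1..n)(t);
   frenet n f k t is e_(k+1)(t). *)
Definition frenet (n : nat) (f : nat -> R -> R) (k : nat) (t : R) : nat -> R :=
  nth (fun _ => 0) (gram_schmidt n [seq gamma_der f j.+1 t | j <- iota 0 n]) k.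

Definition e_last (n : nat) (f : nat -> R -> R) (t : R) : nat -> R :=
  frenet n f n.-1 t.

Definition Gvec (n : nat) (f : nat -> R -> R) (t : R) : nat -> R :=
  fun i => e_last n f t i / e_last n f t n.-1.

Definition Gder (n : nat) (f : nat -> R -> R) (r : nat) (t : R) : nat -> R :=
  fun i => derive1n r (fun s => Gvec n f s i) t.

Definition in_F (n : nat) (f : nat -> R -> R) (T : nat -> R) (x : nat -> R) : Prop :=
  exists (t : R) (s : nat -> R),
    -2 <= t <= 2 /\ (forall r, (r < n.-1)%N -> `|s r| <= T r) /\
    forall i, (i < n)%N -> x i = \sum_(r < n.-1) s r * Gder n f r t i.

Definition in_F_sigma (n : nat) (f : nat -> R -> R) (T : nat -> R) (sigma : R)
  (x : nat -> R) : Prop :=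
  exists y, in_F n f T y /\ vnorm n (fun i => x i - y i) < sigma.

Definition int_pt (n : nat) (z : n.-tuple int) : nat -> R :=
  fun i => (nth 0%R (tval z) i)%:~R.

Definition in_L (n : nat) (f : nat -> R -> R) (T : nat -> R) (sigma : R)
  (z : n.-tuple int) : Prop := in_F_sigma n f T sigma (int_pt z).

End Defs.

From HB Require Import structures.
From mathcomp Require Import all_boot all_order all_algebra.
From mathcomp Require Import all_classical all_reals all_analysis.
From mathcomp Require Import ring lra zify.
Import Order.TTheory GRing.Theory Num.Theory numFieldTopology.Exports numFieldNormedType.Exports.
Local Open Scope ring_scope.
Local Open Scope classical_set_scope.
Set Implicit Arguments. Unset Strict Implicit.

(* Running Gram--Schmidt without normalisation, the non-vanishing Wronskian and
   e_{n,n} make G a quotient of smooth functions with non-vanishing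
   denominators, so G, ..., G^(n-1) are bounded on [-2, 2] and G, ..., G^(n-2)
   are Lipschitz there.  Hence a lattice point z within sigma of
   sum_r s_r G^(r)(t) lies within a constant distance of the centre
   sum_r floor(s_r) G^(r)(t'), where t' is t rounded down to the grid -2 + Z/R:
   rounding s_r costs at most sup |G^(r)|, and moving t costs at most
   (T_r + 1) Lip(G^(r)) |t - t'| <= 2 Lip(G^(r)) because T_r <= R.  The
   integers floor(R (t + 2)), floor(s_r) and z - floor(centre) determine z and
   range over a box with O(R T_0 ... T_(n-2)) points. *)

Section SmoothOn.
Variables (R : realType) (U : set R).
Hypothesis openU : open U.

Definition smooth_on (g : R -> R) := forall k x, U x -> derivable (derive1n k g) x 1.

Section EqOn.
Variables (g h : R -> R) (x : R).
Hypotheses (Ux : U x) (gh : forall y, U y -> g y = h y).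

Lemma near_eq_on : \forall y \near x, g y = h y.
Proof. by apply: filterS (openU Ux) => y /gh. Qed.

Lemma derivable_eq_on : derivable g x 1 -> derivable h x 1.
Proof. exact/near_eq_derivable/near_eq_on. Qed.

Lemma derive1_eq_on : derive1 g x = derive1 h x.
Proof. by rewrite !derive1E; apply/near_eq_derive/near_eq_on. Qed.

End EqOn.

Lemma smooth_on_cst c : smooth_on (cst c).
Proof.
move=> k; elim: k c => [|k IH] c x Ux; first exact: derivable_cst.
rewrite derive1Sn.
have -> : derive1 (cst c) = cst 0 by apply/funext => y; rewrite derive1_cst.
exact: IH.
Qed.

Lemma smooth_on_id : smooth_on id.
Proof.
case=> [|k] x Ux; first exact: derivable_id.
rewrite derive1Sn.
have -> : derive1 id = cst (1 : R) by apply/funext => y; rewrite derive1_id.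
exact: smooth_on_cst.
Qed.

Lemma smooth_on_derive1 g : smooth_on g -> smooth_on (derive1 g).
Proof. by move=> sg k x Ux; rewrite -derive1Sn; apply: sg. Qed.

Lemma smooth_on_derive1n k g : smooth_on g -> smooth_on (derive1n k g).
Proof. by move=> sg j x Ux; rewrite /derive1n -iterD; apply: sg. Qed.

(* The class generated by smooth functions under sums, products, inverses of
   nonvanishing functions and agreement on U is closed under differentiation
   on U; hence all its members are smooth, which yields every closure property
   of smooth_on at once. *)
Inductive smooth_expr : (R -> R) -> Prop :=
| SmoothAtom g : smooth_on g -> smooth_expr g
| SmoothInv g : smooth_on g -> (forall x, U x -> g x != 0) -> smooth_expr (fun x => (g x)^-1)
| SmoothAdd a b : smooth_expr a -> smooth_expr b -> smooth_expr (fun x => a x + b x)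
| SmoothMul a b : smooth_expr a -> smooth_expr b -> smooth_expr (fun x => a x * b x)
| SmoothEq a b : smooth_expr a -> (forall x, U x -> a x = b x) -> smooth_expr b.

Lemma smooth_expr_derive g : smooth_expr g ->
  (forall x, U x -> derivable g x 1) /\
  exists2 h, smooth_expr h & forall x, U x -> derive1 g x = h x.
Proof.
elim=> {g} [g sg | g sg g0 | a b _ [da [a' ea' Ea']] _ [db [b' eb' Eb']]
  | a b ea [da [a' ea' Ea']] eb [db [b' eb' Eb']] | a b _ [da [a' ea' Ea']] ab].
- split=> [x Ux|]; first exact: (sg 0%N).
  by exists (derive1 g) => //; apply/SmoothAtom/smooth_on_derive1.
- split=> [x Ux|]; first by apply: derivableV; [exact: g0 | exact: (sg 0%N)].
  exists (fun x => (cst (-1) x * derive1 g x) * ((g x)^-1 * (g x)^-1)).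
    apply: SmoothMul; last by apply: SmoothMul; apply: SmoothInv.
    apply: SmoothMul; apply: SmoothAtom; first exact: smooth_on_cst.
    exact: smooth_on_derive1.
  move=> x Ux; rewrite derive1E deriveV ?g0 //; last exact: (sg 0%N).
  by rewrite -derive1E /cst -exprVn expr2 /GRing.scale /=; ring.
- split=> [x Ux|]; first exact: derivableD (da x Ux) (db x Ux).
  exists (fun x => a' x + b' x); first exact: SmoothAdd.
  by move=> x Ux; rewrite -Ea' -?Eb' // !derive1E deriveD //; [exact: da | exact: db].
- split=> [x Ux|]; first exact: derivableM (da x Ux) (db x Ux).
  exists (fun x => a x * b' x + b x * a' x); first by apply: SmoothAdd; apply: SmoothMul.
  by move=> x Ux; rewrite -Ea' -?Eb' // !derive1E deriveM //; [exact: da | exact: db].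
- split=> [x Ux|]; first exact: derivable_eq_on Ux ab (da x Ux).
  by exists a' => // x Ux; rewrite -(derive1_eq_on Ux ab) Ea'.
Qed.

Lemma smooth_expr_smooth g : smooth_expr g -> smooth_on g.
Proof.
move=> eg; suff dn k : exists2 h, smooth_expr h & forall x, U x -> derive1n k g x = h x.
  move=> k x Ux; have [h eh Eh] := dn k; have [dh _] := smooth_expr_derive eh.
  by apply: derivable_eq_on Ux _ (dh x Ux) => y Uy; rewrite Eh.
elim: k => [|k [h eh Eh]]; first by exists g.
have [_ [h' eh' Eh']] := smooth_expr_derive eh.
by exists h' => // x Ux; rewrite derive1nS (derive1_eq_on Ux Eh) Eh'.
Qed.

Lemma smooth_on_eq a b : (forall x, U x -> a x = b x) -> smooth_on b -> smooth_on a.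
Proof.
by move=> ab sb; apply/smooth_expr_smooth/(SmoothEq (SmoothAtom sb)) => x /ab.
Qed.

Lemma smooth_onD a b : smooth_on a -> smooth_on b -> smooth_on (fun x => a x + b x).
Proof. by move=> sa sb; apply/smooth_expr_smooth/SmoothAdd; apply: SmoothAtom. Qed.

Lemma smooth_onM a b : smooth_on a -> smooth_on b -> smooth_on (fun x => a x * b x).
Proof. by move=> sa sb; apply/smooth_expr_smooth/SmoothMul; apply: SmoothAtom. Qed.

Lemma smooth_onV a : smooth_on a -> (forall x, U x -> a x != 0) ->
  smooth_on (fun x => (a x)^-1).
Proof. by move=> sa a0; apply/smooth_expr_smooth/SmoothInv. Qed.

Lemma smooth_onB a b : smooth_on a -> smooth_on b -> smooth_on (fun x => a x - b x).
Proof.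
move=> sa sb; apply: smooth_onD => //.
by apply: smooth_on_eq (smooth_onM (smooth_on_cst (c := -1)) sb) => x _; rewrite mulN1r.
Qed.

Lemma smooth_on_sum (I : eqType) (s : seq I) (F : I -> R -> R) :
  (forall i, i \in s -> smooth_on (F i)) -> smooth_on (fun x => \sum_(i <- s) F i x).
Proof.
elim: s => [|i s IH] sF.
  by apply: smooth_on_eq (smooth_on_cst (c := 0)) => x _; rewrite big_nil.
have sFs j : j \in s -> smooth_on (F j) by move=> js; apply: sF; rewrite inE js orbT.
apply: smooth_on_eq (smooth_onD (sF i (mem_head i s)) (IH sFs)) => x _.
by rewrite big_cons.
Qed.

End SmoothOn.

Section GramSchmidt.
Variables (R : realType) (n : nat).

(* Unnormalised Gram--Schmidt avoids the square root in vnorm: smoothness of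
   the frame then only needs the denominators vdot w w to be non-zero. *)
Definition orth_step (ws : seq (nat -> R)) (v : nat -> R) : nat -> R :=
  fun i => v i - \sum_(w <- ws) (vdot n v w / vdot n w w) * w i.

Definition orth_seq (vs : seq (nat -> R)) : seq (nat -> R) :=
  foldl (fun ws v => rcons ws (orth_step ws v)) [::] vs.

Definition normalize (w : nat -> R) : nat -> R := fun i => w i / vnorm n w.

Lemma vdot_ge0 (w : nat -> R) : 0 <= vdot n w w.
Proof. by apply: sumr_ge0 => i _; rewrite -expr2 sqr_ge0. Qed.

Lemma gs_step_normalize ws v :
  gs_step n (map normalize ws) v = normalize (orth_step ws v).
Proof.
suff E : (fun i => v i - \sum_(e <- map normalize ws) vdot n v e * e i) = orth_step ws v.
  by rewrite /gs_step -E.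
apply/funext => i; rewrite big_map; congr (_ - _); apply: eq_bigr => w _.
have -> : vdot n v (normalize w) = vdot n v w / vnorm n w.
  by rewrite /vdot mulr_suml; apply: eq_bigr => j _; rewrite mulrA.
rewrite /normalize -[in RHS](sqr_sqrtr (vdot_ge0 w)) -/(vnorm n w).
by rewrite expr2 invfM; ring.
Qed.

Lemma gram_schmidt_normalize vs : gram_schmidt n vs = map normalize (orth_seq vs).
Proof.
elim/last_ind: vs => [|vs v IH] //.
rewrite /gram_schmidt /orth_seq !foldl_rcons -/(gram_schmidt n vs) IH.
by rewrite map_rcons gs_step_normalize.
Qed.

Variable v : nat -> nat -> R.

Definition orth (j : nat) : nat -> R := orth_step (orth_seq (map v (iota 0 j))) (v j).

Lemma orth_seq_iota N : orth_seq (map v (iota 0 N)) = map orth (iota 0 N).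
Proof.
elim: N => // N IH.
by rewrite -addn1 iotaD !map_cat cats1 /orth_seq foldl_rcons -/(orth_seq _) -IH add0n cats1.
Qed.

Lemma orthE j i : orth j i =
  v j i - \sum_(l <- iota 0 j) (vdot n (v j) (orth l) / vdot n (orth l) (orth l)) * orth l i.
Proof. by rewrite /orth /orth_step orth_seq_iota big_map. Qed.

Definition in_span (j : nat) (x : nat -> R) :=
  exists b : nat -> R, forall i, (i < n)%N -> x i = \sum_(m < j) b m * v m i.

Lemma in_span_lincomb (I : eqType) j (s : seq I) (c : I -> R) (F : I -> nat -> R) :
  (forall l, l \in s -> in_span j (F l)) -> in_span j (fun i => \sum_(l <- s) c l * F l i).
Proof.
elim: s => [|l s IH] sF.
  by exists (fun=> 0) => i _; rewrite big_nil big1 // => m _; rewrite mul0r.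
have [b Hb] := sF l (mem_head l s).
have [b' Hb'] : in_span j (fun i => \sum_(k <- s) c k * F k i).
  by apply: IH => k ks; apply: sF; rewrite inE ks orbT.
exists (fun m => c l * b m + b' m) => i ilt.
rewrite big_cons Hb // Hb' // mulr_sumr -big_split; apply: eq_bigr => m _.
by rewrite mulrDl mulrA.
Qed.

Lemma in_span_widen j j' x : (j <= j')%N -> in_span j x -> in_span j' x.
Proof.
move=> jj' [b Hb]; exists (fun m => if (m < j)%N then b m else 0) => i ilt.
rewrite Hb // (big_ord_widen j' (fun m => b m * v m i) jj') big_mkcond /=.
by apply: eq_bigr => m _; case: ifP; rewrite ?mul0r.
Qed.

Lemma in_span_triangular j (b : nat -> R) x :
  (forall i, (i < n)%N -> x i = v j i - \sum_(m < j) b m * v m i) -> in_span j.+1 x.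
Proof.
move=> Hx; exists (fun m => if (m < j)%N then - b m else 1) => i ilt.
rewrite big_ord_recr /= ltnn mul1r Hx // addrC -sumrN; congr (_ + _).
by apply: eq_bigr => m _; rewrite ltn_ord mulNr.
Qed.

Lemma orth_triangular j :
  exists b : nat -> R, forall i, (i < n)%N -> orth j i = v j i - \sum_(m < j) b m * v m i.
Proof.
elim/ltn_ind: j => j IH.
have [|b Hb] := in_span_lincomb (s := iota 0 j) (F := orth)
   (fun l => vdot n (v j) (orth l) / vdot n (orth l) (orth l)) (j := j).
  move=> l; rewrite mem_iota => /andP [_ lj]; have [b Hb] := IH l lj.
  exact: in_span_widen lj (in_span_triangular Hb).
by exists b => i ilt; rewrite orthE Hb.
Qed.

Lemma vdot_orth_neq0 : \det (\matrix_(i < n, j < n) v j i) != 0 ->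
  forall j, (j < n)%N -> vdot n (orth j) (orth j) != 0.
Proof.
move=> detv j jn; apply: contra detv => /eqP orth0.
have {}orth0 i : (i < n)%N -> orth j i = 0.
  move=> ilt; have /psumr_eq0P sq0 := orth0.
  have /eqP := sq0 (fun k _ => ltac:(by rewrite -expr2 sqr_ge0)) (Ordinal ilt) isT.
  by rewrite mulf_eq0 orbb => /eqP.
have [b Hb] := orth_triangular j.
pose c m := if (m < j)%N then - b m else if m == j then 1 else 0.
rewrite -det_tr; apply/det0P; exists (\row_(m < n) c m).
  apply: contraTneq isT => /rowP /(_ (Ordinal jn)).
  by rewrite !mxE /c ltnn eqxx => /eqP; rewrite oner_eq0.
apply/rowP => i; rewrite !mxE -[RHS](orth0 i (ltn_ord i)) Hb //.
rewrite (eq_bigr (fun m : 'I_n => c m * v m i)) => [|m _]; last by rewrite !mxE.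
rewrite -(big_mkord xpredT (fun m => c m * v m i)) (big_cat_nat (n := j.+1)) //=.
rewrite [X in _ + X]big1_seq ?addr0 => [|m /andP [_]]; last first.
  by rewrite mem_index_iota => /andP [jm _]; rewrite /c ltnNge (ltnW jm) (gtn_eqF jm) mul0r.
rewrite big_nat_recr //= /c ltnn eqxx mul1r big_mkord addrC -sumrN; congr (_ + _).
by apply: eq_bigr => m _; rewrite ltn_ord mulNr.
Qed.

End GramSchmidt.

Section UniformBounds.
Variable R : realType.

Lemma continuous_itv_bounded (h : R -> R) (a b : R) :
  {within `[a, b], continuous h} -> exists M, forall x, a <= x <= b -> `|h x| <= M.
Proof.
move=> ch; have /compact_bounded bnd := continuous_compact ch (@segment_compact _ a b).
have [M [_ HM]] := bnd; exists (M + 1) => x xab.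
by apply: (HM (M + 1)); [rewrite ltrDl | exists x => //; rewrite /= in_itv].
Qed.

Lemma continuous_itv_bounded_family (I : finType) (F : I -> R -> R) (a b : R) :
  (forall k, {within `[a, b], continuous F k}) ->
  exists M, forall k x, a <= x <= b -> `|F k x| <= M.
Proof.
move=> cF; have /choice [M HM] k := continuous_itv_bounded (cF k).
by exists (\big[Num.max/0]_k M k) => k x xab; apply: le_trans (HM k x xab) (le_bigmax _ _ k).
Qed.

Lemma derive1_bounded_lipschitz (h : R -> R) (a b M : R) :
  (forall x, a <= x <= b -> derivable h x 1) ->
  (forall x, a <= x <= b -> `|derive1 h x| <= M) ->
  forall x y, a <= x <= b -> a <= y <= b -> `|h x - h y| <= M * `|x - y|.
Proof.
move=> dh bh x y xab yab.
wlog xy : x y xab yab / x <= y.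
  move=> W; case/orP: (le_total x y) => xy; first exact: W.
  by rewrite distrC [`|x - y|]distrC; apply: W.
have sub z : x <= z <= y -> a <= z <= b.
  case/andP: xab => ax _; case/andP: yab => _ yb /andP [xz zy].
  by rewrite (le_trans ax xz) (le_trans zy yb).
rewrite distrC; have [c cxy ->] : exists2 c, c \in `[x, y]%R & h y - h x = derive1 h c * (y - x).
  apply: MVT_segment xy _ _ => [z|].
    rewrite in_itv /= => /andP [xz zy]; rewrite derive1E; apply/derivableP/dh/sub.
    by rewrite !ltW.
  by apply: derivable_within_continuous => z; rewrite in_itv /= => /sub /dh.
rewrite normrM [`|x - y|]distrC ler_wpM2r //.
by apply/bh/sub; move: cxy; rewrite in_itv.
Qed.

End UniformBounds.

Section FrenetFrame.
Variables (R : realType) (n : nat) (f : nat -> R -> R) (U : set R).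
Hypotheses (n_gt0 : (0 < n)%N) (openU : open U)
  (smooth_f : forall i, (i < n.-1)%N -> smooth_on U (f i))
  (wronski_neq0 : forall t, U t -> \det (wronski_mx n f t) != 0)
  (e_last_neq0 : forall t, U t -> e_last n f t n.-1 != 0).

Let ders t j : nat -> R := gamma_der f j.+1 t.
Let w t : nat -> R := orth n (ders t) n.-1.

Lemma smooth_gamma_der j i : (i < n)%N -> smooth_on U (fun t => gamma_der f j t i).
Proof.
move=> ilt; apply: smooth_on_derive1n; rewrite /gamma.
case: eqP => [_|i0]; first exact: smooth_on_id.
by apply: smooth_f; lia.
Qed.

Lemma smooth_vdot (a b : R -> nat -> R) :
  (forall k, (k < n)%N -> smooth_on U (fun t => a t k)) ->
  (forall k, (k < n)%N -> smooth_on U (fun t => b t k)) ->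
  smooth_on U (fun t => vdot n (a t) (b t)).
Proof.
move=> sa sb; apply: (smooth_on_sum openU) => k _.
by apply: (smooth_onM openU); [apply: sa | apply: sb].
Qed.

Lemma smooth_orth j i : (j < n)%N -> (i < n)%N -> smooth_on U (fun t => orth n (ders t) j i).
Proof.
elim/ltn_ind: j i => j IH i jn ilt.
apply: (smooth_on_eq openU (fun t _ => orthE n (ders t) j i)).
apply: (smooth_onB openU); first exact: smooth_gamma_der.
apply: (smooth_on_sum openU) => l; rewrite mem_iota => /andP [_ lj].
have ln := ltn_trans lj jn.
apply: (smooth_onM openU); last exact: IH.
apply: (smooth_onM openU).
  by apply: smooth_vdot => k kn; [apply: smooth_gamma_der | apply: IH].
apply: (smooth_onV openU); first by apply: smooth_vdot => k kn; apply: IH.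
by move=> t Ut; apply: vdot_orth_neq0 => //; apply: wronski_neq0.
Qed.

Lemma e_last_normalize t : e_last n f t = normalize n (w t).
Proof.
rewrite /e_last /frenet (_ : [seq _ | j <- _] = map (ders t) (iota 0 n)) //.
rewrite gram_schmidt_normalize orth_seq_iota -map_comp (nth_map 0%N) ?size_iota ?prednK //.
by rewrite nth_iota ?prednK.
Qed.

Lemma Gvec_orth t i : U t -> w t n.-1 != 0 /\ Gvec n f t i = w t i / w t n.-1.
Proof.
move=> Ut; have := e_last_neq0 Ut.
rewrite /Gvec e_last_normalize /normalize mulf_eq0 negb_or invr_eq0 => /andP [w0 N0].
by split=> //; field; rewrite w0 N0.
Qed.

Lemma smooth_Gvec i : (i < n)%N -> smooth_on U (fun t => Gvec n f t i).
Proof.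
move=> ilt; have nn : (n.-1 < n)%N by rewrite prednK.
apply: (smooth_on_eq openU (fun t Ut => (Gvec_orth i Ut).2)).
apply: (smooth_onM openU); first exact: smooth_orth.
apply: (smooth_onV openU) => [|t Ut]; first exact: smooth_orth.
exact: (Gvec_orth i Ut).1.
Qed.

Hypothesis itv_subU : `[(-2 : R), 2] `<=` U.

Lemma Gder_bounded_lipschitz : exists M, forall r i, (r < n.-1)%N -> (i < n)%N ->
  forall t t', -2 <= t <= 2 -> -2 <= t' <= 2 ->
  `|Gder n f r t i| <= M /\ `|Gder n f r t i - Gder n f r t' i| <= M * `|t - t'|.
Proof.
have derG r i t : (i < n)%N -> -2 <= t <= 2 -> derivable (Gder n f r ^~ i) t 1.
  by move=> ilt ht; apply: (smooth_Gvec ilt); apply: itv_subU; rewrite /= in_itv.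
have contG (ri : 'I_n * 'I_n) : {within `[-2, 2], continuous Gder n f ri.1 ^~ ri.2}.
  by apply: derivable_within_continuous => t; rewrite in_itv => /derG; apply.
have [M HM] := continuous_itv_bounded_family contG.
exists M => r i rn ilt t t' ht ht'.
have r1n : (r.+1 < n)%N by rewrite -(prednK n_gt0).
split; first exact: (HM (Ordinal (ltnW r1n), Ordinal ilt)).
apply: derive1_bounded_lipschitz ht ht' => [s /derG|s hs]; first exact.
by rewrite -derive1nS; apply: (HM (Ordinal r1n, Ordinal ilt)).
Qed.

End FrenetFrame.

Definition int_range (a b : int) : seq int := [seq a + k%:Z | k <- iota 0 (absz (b - a + 1))].

Lemma size_int_range a b : size (int_range a b) = absz (b - a + 1).
Proof. by rewrite size_map size_iota. Qed.

Lemma mem_int_range a b x : a <= x <= b -> x \in int_range a b.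
Proof. by move=> /andP [ax xb]; apply/mapP; exists (absz (x - a)); [rewrite mem_iota /=|]; lia. Qed.

Definition box (rs : seq (seq int)) : seq (seq int) :=
  foldr (fun r acc => [seq x :: y | x <- r, y <- acc]) [:: [::]] rs.

Lemma size_box rs : size (box rs) = (\prod_(r <- rs) size r)%N.
Proof. by elim: rs => [|r rs IH]; rewrite ?big_nil ?big_cons //= size_allpairs IH. Qed.

Section FloorBoxes.
Variable R : realType.

Definition floor_range (K : R) : seq int := int_range (Num.floor (- K)) (Num.floor K).

Lemma floor_in_range (p K : R) : `|p| <= K -> Num.floor p \in floor_range K.
Proof. by rewrite ler_norml => /andP [Kp pK]; apply/mem_int_range/andP; split; apply: le_floor. Qed.

Lemma size_floor_range (K : R) : 1 <= K -> (size (floor_range K))%:R <= 4 * K.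
Proof.
move=> K1; have le_floorNK : Num.floor (- K) <= Num.floor K by apply: le_floor; lra.
rewrite size_int_range natr_absz ger0_norm; last by rewrite addr_ge0 ?subr_ge0.
have := floor_le K; have := floorD1_gt (- K).
by rewrite !intrD ?intrB /=; lra.
Qed.

Lemma box_floor (ps Ks : seq R) : all2 (fun p K => `|p| <= K) ps Ks ->
  map Num.floor ps \in box (map floor_range Ks).
Proof.
elim: ps Ks => [|p ps IH] [|K Ks] //= /andP [pK psKs].
by apply: allpairs_f; [apply: floor_in_range | apply: IH].
Qed.

Lemma count_floor_codes (T : eqType) (s : seq T) (phi : T -> seq R) (Ks : seq R) :
  uniq s -> {in s &, injective (fun z => map Num.floor (phi z))} ->
  (forall z, z \in s -> all2 (fun p K => `|p| <= K) (phi z) Ks) ->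
  (forall K, K \in Ks -> 1 <= K) ->
  (size s)%:R <= \prod_(K <- Ks) (4 * K).
Proof.
move=> us inj_code in_box Ks1.
have : (size s <= size (box (map floor_range Ks)))%N.
  rewrite -(size_map (fun z => map Num.floor (phi z))); apply: uniq_leq_size.
    by rewrite map_inj_in_uniq.
  by move=> _ /mapP [z zs ->]; apply/box_floor/in_box.
rewrite size_box big_map -(ler_nat R) natr_prod => /le_trans; apply.
rewrite big_seq [X in _ <= X]big_seq; apply: ler_prod => K /Ks1 K1.
by rewrite ler0n size_floor_range.
Qed.

End FloorBoxes.

Lemma all2_cat (S T : Type) (r : S -> T -> bool) s1 s2 t1 t2 : size s1 = size t1 ->
  all2 r (s1 ++ s2) (t1 ++ t2) = all2 r s1 t1 && all2 r s2 t2.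
Proof. by elim: s1 t1 => [|x s1 IH] [|y t1] //= [/IH ->]; rewrite andbA. Qed.

Lemma all2_map (I S T : Type) (r : S -> T -> bool) (F : I -> S) (K : I -> T) l :
  all2 r (map F l) (map K l) = all (fun i => r (F i) (K i)) l.
Proof. by elim: l => //= i l ->. Qed.

Section Counting.
Variables (R : realType) (n : nat) (f : nat -> R -> R) (M sigma : R).

Lemma coord_le_vnorm (x : nat -> R) i : (i < n)%N -> `|x i| <= vnorm n x.
Proof.
move=> ilt; rewrite /vnorm -sqrtr_sqr ler_wsqrtr // /vdot (bigD1 (Ordinal ilt)) //= expr2 lerDl.
by apply: sumr_ge0 => k _; rewrite -expr2 sqr_ge0.
Qed.

Lemma norm_mulB_le (a c g g' d Rr : R) : `|a - c| <= 1 -> `|c| <= 2 * Rr -> Rr * d <= 1 ->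
  `|g| <= M -> `|g - g'| <= M * d -> `|a * g - c * g'| <= 3 * M.
Proof.
move=> ac cRr Rrd gM gg'.
have M0 : 0 <= M := le_trans (normr_ge0 _) gM.
have Md0 : 0 <= M * d := le_trans (normr_ge0 _) gg'.
have -> : a * g - c * g' = (a - c) * g + c * (g - g') by ring.
apply: le_trans (ler_normD _ _) _; rewrite !normrM.
have h1 : `|a - c| * `|g| <= M by rewrite -[M]mul1r ler_pM.
have h2 : `|c| * `|g - g'| <= 2 * M.
  apply: le_trans (ler_pM _ _ cRr gg') _ => //.
  have -> : 2 * Rr * (M * d) = 2 * M * (Rr * d) by ring.
  by rewrite -[X in _ <= X]mulr1 ler_wpM2l ?mulr_ge0.
lra.
Qed.

Hypotheses (n_gt1 : (1 < n)%N) (sigma_ge1 : 1 <= sigma)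
  (G_bounds : forall r i, (r < n.-1)%N -> (i < n)%N -> forall t t', -2 <= t <= 2 -> -2 <= t' <= 2 ->
     `|Gder n f r t i| <= M /\ `|Gder n f r t i - Gder n f r t' i| <= M * `|t - t'|).

Definition tube_width : R := sigma + (n.-1)%:R * (3 * M).
Definition count_const : R := 16 * 4 ^+ n.-1 * (4 * (tube_width + 1)) ^+ n.

Variables (Rr : R) (T : nat -> R).
Hypothesis T_range : forall r, (r < n.-1)%N -> sigma <= T r /\ T r <= Rr.

Lemma Rr_ge1 : 1 <= Rr.
Proof.
have [sT TRr] : sigma <= T 0%N /\ T 0%N <= Rr by apply: T_range; lia.
exact: le_trans sigma_ge1 (le_trans sT TRr).
Qed.

Definition time_code (t : R) : int := Num.floor (Rr * (t + 2)).
Definition snap (c : int) : R := c%:~R / Rr - 2.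
Definition coef_codes (s : nat -> R) : seq int := [seq Num.floor (s r) | r <- iota 0 n.-1].
Definition center (c : int) (cs : seq int) (i : nat) : R :=
  \sum_(r < n.-1) (nth 0 cs r)%:~R * Gder n f r (snap c) i.

Lemma snap_time_code t : -2 <= t ->
  -2 <= snap (time_code t) <= t /\ Rr * (t - snap (time_code t)) <= 1.
Proof.
move=> t2; have Rr1 := Rr_ge1; have := floor_itv (Rr * (t + 2)).
have : 0 <= (time_code t)%:~R :> R by rewrite ler0z floor_ge0 mulr_ge0 //; lra.
rewrite /snap -/(time_code t) intrD; set c := (time_code t)%:~R => c0 /andP [cle clt].
have -> : Rr * (t - (c / Rr - 2)) = Rr * (t + 2) - c by field; lra.
have cRr : c / Rr <= t + 2 by rewrite ler_pdivrMr; lra.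
have cRr0 : 0 <= c / Rr by rewrite divr_ge0 //; lra.
by split; [apply/andP; split|]; lra.
Qed.

Lemma center_near t s i : -2 <= t <= 2 -> (forall r, (r < n.-1)%N -> `|s r| <= T r) -> (i < n)%N ->
  `|\sum_(r < n.-1) s r * Gder n f r t i - center (time_code t) (coef_codes s) i|
    <= (n.-1)%:R * (3 * M).
Proof.
move=> /andP [t2 t2'] sT ilt; have Rr1 := Rr_ge1.
have [/andP [t'2 t't] Rrd] := snap_time_code t2.
have -> : (n.-1)%:R * (3 * M) = \sum_(r < n.-1) 3 * M.
  by rewrite big_const_ord iter_addr addr0 mulr_natl.
rewrite -sumrB; apply: le_trans (ler_norm_sum _ _ _) _; apply: ler_sum => r _.
rewrite (nth_map 0%N) ?size_iota // nth_iota // add0n.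
have [_ TRr] := T_range (ltn_ord r).
have [Gb GL] := G_bounds (ltn_ord r) ilt (t := t) (t' := snap (time_code t)) ltac:(lra) ltac:(lra).
have := floor_itv (s r); rewrite intrD => /andP [fl fg].
have := sT r (ltn_ord r); rewrite ler_norml => /andP [sl sg].
apply: (norm_mulB_le (Rr := Rr)) Gb GL.
- by rewrite ger0_norm ?subr_ge0 //; lra.
- by rewrite ler_norml; apply/andP; split; lra.
- by rewrite ger0_norm ?subr_ge0.
Qed.

Lemma in_L_near_center (z : n.-tuple int) : in_L f T sigma z ->
  exists t s, [/\ -2 <= t <= 2, forall r, (r < n.-1)%N -> `|s r| <= T r &
    forall i, (i < n)%N -> `|int_pt R z i - center (time_code t) (coef_codes s) i| <= tube_width].
Proof.
move=> [y [[t [s [ht [sT ys]]]] zy]]; exists t, s; split=> // i ilt.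
have := ler_normD (int_pt R z i - y i) (y i - center (time_code t) (coef_codes s) i).
rewrite addrA subrK => /le_trans; apply; apply: lerD.
  exact/ltW/(le_lt_trans (coord_le_vnorm (fun i => int_pt R z i - y i) ilt) zy).
by rewrite ys //; apply: center_near.
Qed.

Lemma M_ge0 : 0 <= M.
Proof.
have [t0 n0] : -2 <= (0 : R) <= 2 /\ (0 < n.-1)%N by split; [apply/andP; split; lra | lia].
have [Gb _] := G_bounds n0 (ltnW n_gt1) t0 t0.
exact: le_trans (normr_ge0 _) Gb.
Qed.

Definition code (t : R) (s : nat -> R) (z : n.-tuple int) : seq R :=
  Rr * (t + 2) :: [seq s r | r <- iota 0 n.-1] ++
  [seq (nth 0 z i - Num.floor (center (time_code t) (coef_codes s) i))%:~R | i <- iota 0 n].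

Definition code_bounds : seq R :=
  4 * Rr :: [seq T r | r <- iota 0 n.-1] ++ [seq tube_width + 1 | _ <- iota 0 n].

Lemma prod_code_bounds :
  \prod_(K <- code_bounds) (4 * K) = count_const * Rr * \prod_(r < n.-1) T r.
Proof.
have iota_ord m (F : nat -> R) : \prod_(j <- iota 0 m) F j = \prod_(j < m) F j.
  by rewrite -(big_mkord xpredT) /index_iota subn0.
rewrite big_cons big_cat !big_map /= !iota_ord big_split /= !prodr_const !card_ord.
by rewrite /count_const; ring.
Qed.

Lemma code_bounds_ge1 K : K \in code_bounds -> 1 <= K.
Proof.
have Rr1 := Rr_ge1; rewrite inE mem_cat => /or3P [/eqP -> | /mapP [r] | /mapP [i]]; first lra.
  by rewrite mem_iota => /andP [_ /T_range [sT _]] ->; apply: le_trans sigma_ge1 sT.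
move=> _ ->; rewrite lerDr addr_ge0 ?mulr_ge0 ?M_ge0 //.
exact: le_trans ler01 sigma_ge1.
Qed.

Lemma code_in_box t s z : -2 <= t <= 2 -> (forall r, (r < n.-1)%N -> `|s r| <= T r) ->
  (forall i, (i < n)%N -> `|int_pt R z i - center (time_code t) (coef_codes s) i| <= tube_width) ->
  all2 (fun p K => `|p| <= K) (code t s z) code_bounds.
Proof.
move=> t2 sT near; have Rr1 := Rr_ge1.
rewrite /= all2_cat ?size_map // !all2_map; apply/and3P; split.
- by rewrite ger0_norm ?mulr_ge0 ?[4 * Rr]mulrC ?ler_wpM2l //; lra.
- by apply/allP => r; rewrite mem_iota => /andP [_ /sT].
apply/allP => i; rewrite mem_iota => /andP [_ ilt] /=.
have := near i ilt; have := floor_itv (center (time_code t) (coef_codes s) i).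
rewrite intrB intrD rmorph1 -/(int_pt R z i) => /andP [fl fg].
by rewrite !ler_norml => /andP [l g]; apply/andP; split; lra.
Qed.

Lemma floor_code_inj t1 s1 z1 t2 s2 z2 :
  map Num.floor (code t1 s1 z1) = map Num.floor (code t2 s2 z2) -> z1 = z2.
Proof.
move=> /= [ecode]; rewrite !map_cat => ecodes.
have := congr1 (take n.-1) ecodes; have := congr1 (drop n.-1) ecodes.
rewrite !take_size_cat ?drop_size_cat ?size_map ?size_iota // -!map_comp => eoff ecoef.
apply: val_inj; apply: (@eq_from_nth _ 0); rewrite ?size_tuple // => i ilt.
have := congr1 (nth 0 ^~ i) eoff; rewrite !(nth_map 0%N) ?size_iota // nth_iota //= !intrKfloor.
have ecoef' : coef_codes s1 = coef_codes s2 by exact: ecoef.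
by rewrite /time_code ecode ecoef' => /addIr.
Qed.

Lemma count_lattice_points (s : seq (n.-tuple int)) :
  uniq s -> (forall z, z \in s -> in_L f T sigma z) ->
  (size s)%:R <= count_const * Rr * \prod_(r < n.-1) T r.
Proof.
move=> us sL; rewrite -prod_code_bounds.
have /choice [w Hw] (z : n.-tuple int) : exists w : R * (nat -> R),
    z \in s -> all2 (fun p K => `|p| <= K) (code w.1 w.2 z) code_bounds.
  have [/sL/in_L_near_center [t [sv [ht sT near]]] | zs] := boolP (z \in s).
    by exists (t, sv) => _; apply: code_in_box.
  by exists (0, fun=> 0).
apply: (count_floor_codes (phi := fun z => code (w z).1 (w z).2 z)) us _ Hw code_bounds_ge1.
by move=> z1 z2 _ _; apply: floor_code_inj.
Qed.

End Counting.

Theorem corollary4p2 (R : realType) (n : nat) (f : nat -> R -> R) (U : set R) :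
  (3 <= n)%N ->
  open U ->
  `[(-2 : R), 2]%classic `<=` U ->
  (* f = (f_0, ..., f_{n-2}) is smooth on U *)
  (forall i k x, (i < n.-1)%N -> U x -> derivable (derive1n k (f i)) x 1) ->
  (* det[gamma^(1)(t) ... gamma^(n)(t)] <> 0 on U *)
  (forall t, U t -> \det (wronski_mx n f t) != 0) ->
  (* standing assumption: e_{n,n}(t) <> 0 on U *)
  (forall t, U t -> e_last n f t n.-1 != 0) ->
  forall sigma : R, 1 <= sigma ->
  exists C : R,
    forall (Rr : R) (T : nat -> R),
      (forall r, (r < n.-1)%N -> sigma <= T r /\ T r <= Rr) ->
      forall s : seq (n.-tuple int),
        uniq s -> (forall z, z \in s -> in_L f T sigma z) ->
        (size s)%:R <= C * Rr * \prod_(r < n.-1) T r.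
Proof.
move=> n3 openU itv_subU smooth_f wronski_neq0 e_last_neq0 sigma sigma_ge1.
have n_gt1 : (1 < n)%N by apply: leq_trans n3.
have [M G_bounds] := Gder_bounded_lipschitz (ltnW n_gt1) openU
  (fun i ilt k x => smooth_f i k x ilt) wronski_neq0 e_last_neq0 itv_subU.
exists (count_const n M sigma) => Rr T T_range s us sL.
exact: (count_lattice_points n_gt1 sigma_ge1 G_bounds T_range us sL).
Qed.
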